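(* Let $m,n$ be positive integers and let $m=p_1^{k_1}\cdots p_r^{k_r}$ be the prime factorization of $m$. If $p_1,\dots,p_r$ are odd and none of them is a Wieferich prime, then $$P(m,n)=\mathrm{lcm}\left(p_1^{k_1-1}P(p_1,n),\dots,p_r^{k_r-1}P(p_r,n)\right).$$
   Context: For positive integers $m,n$, let $\mathbf{Z}_m$ be the integers modulo $m$ and $T:\mathbf{Z}_m^n\to\mathbf{Z}_m^n$, $T(a_0,\dots,a_{n-1})=(a_0+a_1,a_1+a_2,\dots,a_{n-2}+a_{n-1},a_{n-1}+a_0)$. For $\mathbf{a}\in\mathbf{Z}_m^n$ the sequence $(T^k\mathbf{a})_{k\ge0}$ is eventually periodic; its cycle length is the smallest positive integer $P$ such that there is $N$ with $T^{k+P}\mathbf{a}=T^k\mathbf{a}$ for all $k\ge N$. $P(m,n)$ denotes the maximum of the cycle lengths of $(T^k\mathbf{a})_{k\ge0}$ over all $\mathbf{a}\in\mathbf{Z}_m^n$. A prime $p$ is a Wieferich prime if $2^{p-1}\equiv1\pmod{p^2}$. *)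

From Stdlib Require Import ClassicalEpsilon Lia.
From mathcomp Require Import all_boot zify.
Set Implicit Arguments. Unset Strict Implicit. Unset Printing Implicit Defensive.

(* Z_m represented as 'I_m (written 'I_m.-1.+1, equal to 'I_m for m > 0),
   with arithmetic mod m; this also works for m = 1. *)
Definition Zm (m : nat) : finType := 'I_m.-1.+1.

Definition state (m n : nat) : finType := {ffun 'I_n -> Zm m}.

Definition Tmap (m n : nat) (a : state m n) : state m n :=
  [ffun i : 'I_n => inord ((a i + a (ordS i)) %% m) : Zm m].

Definition is_eventual_period (m n : nat) (a : state m n) (P : nat) : Prop :=
  0 < P /\ exists N, forall k, N <= k -> iter (k + P) (@Tmap m n) a = iter k (@Tmap m n) a.

Definition is_eventual_periodb m n (a : state m n) (P : nat) : bool :=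
  if excluded_middle_informative (is_eventual_period a P) then true else false.

Lemma eventual_period_exists (T : finType) (f : T -> T) (a : T) :
  exists P, 0 < P /\ exists N, forall k, N <= k -> iter (k + P) f a = iter k f a.
Proof.
pose g := fun i : 'I_#|T|.+1 => iter i f a.
have : ~~ injectiveb g.
  apply/negP => /injectiveP inj; move: (leq_card _ inj).
  by rewrite card_ord ltnn.
case/injectivePn => i [j ij eq].
wlog lt : i j ij eq / i < j.
  move=> H; case: (ltngtP i j) => c.
  - exact: (H i j).
  - by apply: (H j i); rewrite // eq_sym.
  - by move/eqP: ij; case; apply: val_inj.
exists (j - i); split; first by rewrite subn_gt0.
exists i => k ki.
have -> : k + (j - i) = (k - i) + j.
  by lia.

rewrite iterD -[in RHS](subnK ki) iterD.
by rewrite /g in eq; rewrite eq.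
Qed.

Lemma is_eventual_periodb_exists m n (a : state m n) :
  exists P, is_eventual_periodb a P.
Proof.
have [P HP] := eventual_period_exists (@Tmap m n) a.
exists P; rewrite /is_eventual_periodb.
by case: excluded_middle_informative.
Qed.

Definition cycle_length m n (a : state m n) : nat :=
  ex_minn (is_eventual_periodb_exists a).

Definition Pmn (m n : nat) : nat := \max_(a : state m n) cycle_length a.

Definition wieferich (p : nat) : Prop := prime p /\ 2 ^ (p - 1) = 1 %[mod p ^ 2].

From Stdlib Require Import ClassicalEpsilon.
From mathcomp Require Import all_boot all_algebra zify ring cyclic.
Set Implicit Arguments. Unset Strict Implicit. Unset Printing Implicit Defensive.
Import GRing.Theory Num.Theory.

(* Reading a state (a_0, ..., a_(n-1)) backwards as the coefficients of a polynomial
   identifies Z_m^n with Z[X]/(m, X^n - 1) and turns T into multiplication by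
   u = 1 + X.  Hence P(m,n) is the least Q > 0 such that u^N (u^Q - 1) lies in the
   ideal (m, X^n - 1) for some N, and by the Chinese remainder theorem P(m,n) is the
   lcm of the P(p^k,n) over the prime powers p^k exactly dividing m.
   For an odd prime p, a period Q modulo p^k (k > 0) yields the period pQ modulo
   p^(k+1); conversely, if pR is a period modulo p^(k+2) and R one modulo p^k, then R
   is a period modulo p^(k+1), by expanding (u^N + Z)^p with p^k | Z.  Hence
   P(p^(k+1),n) = p^k P(p,n) as soon as P(p,n) is not a period modulo p^2.
   This is where non-Wieferich enters.  Write n = n' p^e with p coprime to n', and
   b = p^phi(n') - 1; by Frobenius P(p,n) divides p^e b.  If e = 0, evaluating at X = 1
   would give 2^b = 1 mod p^2 with p not dividing b, so p would be Wieferich.  If e > 0,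
   then u^(p^e) = 2 + sum_(0<i<p) C(p,i) X^(i p^(e-1)) modulo (p^2, X^(p^e) - 1), and
   comparing the coefficients of 1 and X^(p^(e-1)) forces p | b. *)

Section IdealOfCyclicPolynomials.
Local Open Scope ring_scope.

Definition in_ideal (n q : nat) (f : {poly int}) :=
  exists d g, f = d * ('X^n - 1) + q%:R * g.

Lemma in_ideal0 n q : in_ideal n q 0.
Proof. by exists 0, 0; rewrite !mul0r mulr0 addr0. Qed.

Lemma in_idealD n q f g : in_ideal n q f -> in_ideal n q g -> in_ideal n q (f + g).
Proof. by move=> [d1 [g1 ->]] [d2 [g2 ->]]; exists (d1 + d2), (g1 + g2); ring. Qed.

Lemma in_idealN n q f : in_ideal n q f -> in_ideal n q (- f).
Proof. by move=> [d [g ->]]; exists (- d), (- g); ring. Qed.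

Lemma in_idealB n q f g : in_ideal n q f -> in_ideal n q g -> in_ideal n q (f - g).
Proof. by move=> If /in_idealN; apply: in_idealD. Qed.

Lemma in_idealMr n q f h : in_ideal n q f -> in_ideal n q (f * h).
Proof. by move=> [d [g ->]]; exists (d * h), (g * h); ring. Qed.

Lemma in_idealMl n q f h : in_ideal n q f -> in_ideal n q (h * f).
Proof. by rewrite mulrC; apply: in_idealMr. Qed.

Lemma in_idealMn n q f k : in_ideal n q f -> in_ideal n q (f *+ k).
Proof. by rewrite -mulr_natl; apply: in_idealMl. Qed.

Lemma in_ideal_sum n q (I : Type) (r : seq I) (P : pred I) (F : I -> {poly int}) :
  (forall i, P i -> in_ideal n q (F i)) -> in_ideal n q (\sum_(i <- r | P i) F i).
Proof. by move=> IF; elim/big_rec: _ => [|i f /IF]; [apply: in_ideal0 | apply: in_idealD]. Qed.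

Lemma in_ideal_natl n q g : in_ideal n q (q%:R * g).
Proof. by exists 0, g; rewrite mul0r add0r. Qed.

Lemma in_ideal_Xnsub1 n q h : in_ideal n q (h * ('X^n - 1)).
Proof. by exists h, 0; rewrite mulr0 addr0. Qed.

Lemma in_idealMn_dvd n q f k : (q %| k)%N -> in_ideal n q (f *+ k).
Proof. by move=> /dvdnP [c ->]; rewrite mulrnA -mulr_natl; apply: in_ideal_natl. Qed.

Lemma in_ideal_mod_dvd n q d f : (d %| q)%N -> in_ideal n q f -> in_ideal n d f.
Proof.
move=> /dvdnP [k ->] [e [g ->]]; exists e, (k%:R * g).
by rewrite natrM mulrA [_ * d%:R]mulrC.
Qed.

Lemma in_idealM n a b f g : in_ideal n a f -> in_ideal n b g -> in_ideal n (a * b)%N (f * g).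
Proof.
move=> [d1 [g1 ->]] [d2 [g2 ->]].
exists (d1 * (d2 * ('X^n - 1) + b%:R * g2) + a%:R * g1 * d2), (g1 * g2).
by rewrite natrM; ring.
Qed.

Lemma in_ideal_scale n q c f : in_ideal n q f -> in_ideal n (c * q)%N (c%:R * f).
Proof. by apply: in_idealM; rewrite -[c%:R]mulr1; apply: in_ideal_natl. Qed.

Lemma in_ideal_exp n q f k : in_ideal n q f -> in_ideal n (q ^ k) (f ^+ k).
Proof.
move=> If; elim: k => [|k IH]; last by rewrite exprS expnS; apply: in_idealM.
by rewrite expr0 expn0 -[1]mul1r; apply: in_ideal_natl.
Qed.

Lemma in_idealMn_mod n q p f k : in_ideal n q f -> (p %| k)%N -> in_ideal n (p * q)%N (f *+ k).
Proof.
move=> If /dvdnP [c ->]; rewrite mulrnA -mulr_natl.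
by apply: in_ideal_scale; apply: in_idealMn.
Qed.

Lemma in_ideal_expB n q (A B : {poly int}) k :
  in_ideal n q (A - B) -> in_ideal n q (A ^+ k - B ^+ k).
Proof. by rewrite subrXX; apply: in_idealMr. Qed.

Lemma in_ideal_expM_le n q (a y : {poly int}) N N' :
  in_ideal n q (a ^+ N * y) -> (N <= N')%N -> in_ideal n q (a ^+ N' * y).
Proof. by move=> Iy le; rewrite -(subnK le) exprD -mulrA; apply: in_idealMl. Qed.

Lemma Xnsub1_dvd n k : (n %| k)%N -> exists h : {poly int}, 'X^k - 1 = h * ('X^n - 1).
Proof.
by move=> /dvdnP [t ->]; exists (\sum_(i < t) ('X^n) ^+ i); rewrite mulnC exprM subrX1 mulrC.
Qed.

Lemma in_ideal_exp_dvd n n' q f : (n' %| n)%N -> in_ideal n q f -> in_ideal n' q f.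
Proof. by move=> /Xnsub1_dvd [h E] [d [g ->]]; exists (d * h), g; rewrite E; ring. Qed.

Lemma in_ideal_XnB n q a b : (b <= a)%N -> (n %| a - b)%N -> in_ideal n q ('X^a - 'X^b).
Proof.
move=> le /Xnsub1_dvd [h E]; exists ('X^b * h), 0.
by rewrite -(subnK le) exprD -mulrA -E; ring.
Qed.

Lemma in_ideal_horner1 n q f : in_ideal n q f -> (q%:Z %| f.[1])%Z.
Proof.
move=> [d [g ->]]; rewrite !hornerE expr1n subrr mulr0 add0r -polyC_natr hornerC.
by rewrite natz dvdz_mulr.
Qed.

End IdealOfCyclicPolynomials.

Section RemainderModXnsub1.
Local Open Scope ring_scope.
Variable n : nat.
Hypothesis n_gt0 : (0 < n)%N.

Definition rmodXn (f : {poly int}) := Pdiv.CommonRing.rmodp f ('X^n - 1).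

Let Xnsub1_monic : ('X^n - 1 : {poly int}) \is monic := monicXnsubC 1 n_gt0.

Let size_Xnsub1 : size ('X^n - 1 : {poly int}) = n.+1.
Proof. by rewrite -polyC1 size_XnsubC. Qed.

Lemma size_rmodXn (f : {poly int}) : (size (rmodXn f) <= n)%N.
Proof.
rewrite -ltnS -size_Xnsub1 Pdiv.CommonRing.ltn_rmodp.
by rewrite -size_poly_eq0 size_Xnsub1.
Qed.

Lemma rmodXn_small (f : {poly int}) : (size f <= n)%N -> rmodXn f = f.
Proof. by move=> sf; apply: Pdiv.CommonRing.rmodp_small; rewrite size_Xnsub1. Qed.

Lemma rmodXnD (f g : {poly int}) : rmodXn (f + g) = rmodXn f + rmodXn g.
Proof. exact: Pdiv.RingMonic.rmodpD. Qed.

Lemma rmodXnB (f g : {poly int}) : rmodXn (f - g) = rmodXn f - rmodXn g.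
Proof. exact: Pdiv.RingMonic.rmodpB. Qed.

Lemma rmodXnMX (f : {poly int}) k : (k < n)%N ->
  (rmodXn (f * 'X))`_k = (rmodXn f)`_(if k == 0%N then n.-1 else k.-1).
Proof.
move=> kn; set r := rmodXn f; set c := r`_n.-1.
have E : rmodXn (f * 'X) = r * 'X - c%:P * ('X^n - 1).
  rewrite /rmodXn -Pdiv.RingMonic.rmodp_mulml // -/r.
  rewrite {1}(_ : r * 'X = c%:P * ('X^n - 1) + (r * 'X - c%:P * ('X^n - 1))); last by ring.
  rewrite Pdiv.RingMonic.rmodp_addl_mul_small // size_Xnsub1 ltnS.
  apply/leq_sizeP => j jn; rewrite coefB coefMX coefCM coefB coefXn coef1.
  have /leq_sizeP Sr := size_rmodXn f.
  case: (ltngtP n j) => [nj|nj|<-]; first 2 [lia].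
  - rewrite (_ : (j == 0%N) = false) /=; last by lia.
    by rewrite /r Sr ?mulr0 ?subr0 //; lia.
  - by rewrite (_ : (n == 0%N) = false) /= ?subr0 ?mulr1 ?subrr //; lia.
rewrite E coefB coefMX coefCM coefB coefXn coef1.
case: eqP => [->|k0]; first by rewrite (_ : (0 == n)%N = false) /=; [ring | lia].
by rewrite (_ : (k == n)%N = false) /= ?subrr ?mulr0 ?subr0 //; lia.
Qed.

Lemma in_idealE q (f : {poly int}) : in_ideal n q f <-> forall j, (q%:Z %| (rmodXn f)`_j)%Z.
Proof.
have natC k : (k%:R : {poly int}) = (k%:Z)%:P by rewrite -polyC_natr natz.
split.
  move=> [d [g ->]] j; rewrite rmodXnD /rmodXn Pdiv.RingMonic.rmodp_mull // add0r.
  by rewrite natC mul_polyC Pdiv.RingMonic.rmodpZ // coefZ dvdz_mulr.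
move=> H; exists (Pdiv.CommonRing.rdivp f ('X^n - 1)),
  (\poly_(j < n) (((rmodXn f)`_j) %/ q%:Z)%Z).
rewrite {1}(Pdiv.RingMonic.rdivp_eq Xnsub1_monic f); congr (_ + _).
apply/polyP => j; rewrite natC mul_polyC coefZ coef_poly.
case: ifP => jn; first by rewrite mulrC divzK.
have /leq_sizeP -> := size_rmodXn f; first by rewrite mulr0.
by rewrite leqNgt jn.
Qed.

Lemma in_ideal_cancel c q (f : {poly int}) : (0 < c)%N ->
  in_ideal n (c * q)%N (c%:R * f) -> in_ideal n q f.
Proof.
move=> c0 /in_idealE Icf; apply/in_idealE => j; move: (Icf j).
rewrite /rmodXn -polyC_natr mul_polyC Pdiv.RingMonic.rmodpZ // coefZ PoszM.
by rewrite natz dvdz_mul2l // eqz_nat -lt0n.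
Qed.

Lemma in_ideal_cancel_mul c q r (f : {poly int}) : (0 < c)%N -> (0 < q)%N ->
  in_ideal n q f -> in_ideal n (c * (q * r))%N (c%:R * f) -> in_ideal n (q * r)%N f.
Proof.
move=> c0 q0 [d [g ->]] Icf; apply: in_idealD; first exact: in_ideal_Xnsub1.
apply: in_ideal_scale; apply: (@in_ideal_cancel (c * q)%N); first by rewrite muln_gt0 c0.
have -> : (c * q)%N%:R * g = c%:R * (d * ('X^n - 1) + q%:R * g) - (c%:R * d) * ('X^n - 1).
  by rewrite natrM; ring.
by rewrite -mulnA; apply: in_idealB => //; apply: in_ideal_Xnsub1.
Qed.

Lemma in_ideal_coef q (f : {poly int}) j : (size f <= n)%N -> in_ideal n q f -> (q%:Z %| f`_j)%Z.
Proof. by move=> sf /in_idealE /(_ j); rewrite rmodXn_small. Qed.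

End RemainderModXnsub1.

Section StatesAsPolynomials.
Local Open Scope ring_scope.
Variables m n : nat.
Hypotheses (m_gt0 : (0 < m)%N) (n_gt0 : (0 < n)%N).

(* State index i is stored as the coefficient of X^(-i mod n): multiplying by
   1 + X then adds to coefficient -i the coefficient -(i+1), as T does. *)
Definition opp_idx (i : 'I_n) : nat := ((n - i) %% n)%N.

Lemma opp_idx_lt i : (opp_idx i < n)%N.
Proof. exact: ltn_pmod. Qed.

Lemma opp_idx_inj : injective opp_idx.
Proof.
move=> [i ilt] [j jlt]; rewrite /opp_idx /= => E; apply: val_inj => /=.
case: i ilt E => [|i] ilt; case: j jlt => [|j] jlt //=;
  rewrite ?subn0 ?modnn !modn_small; lia.
Qed.

Lemma opp_idx_ordS i :
  opp_idx (ordS i) = if opp_idx i == 0%N then n.-1 else (opp_idx i).-1.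
Proof.
rewrite /opp_idx /=; case: i => [[|i] ilt] /=.
  rewrite subn0 modnn /=; case: n ilt => [|[|n']] //= _.
  by rewrite subn1 !modn_small.
rewrite (modn_small (m := (n - i.+1)%N)); last by lia.
rewrite (_ : (n - i.+1 == 0)%N = false); last by lia.
case: (ltngtP i.+2 n) => c; last 2 [lia].
- by rewrite (modn_small (m := i.+2)) // modn_small; lia.
- by rewrite -c modnn subn0 modnn; lia.
Qed.

Lemma opp_idx_surj j : (j < n)%N -> exists i, opp_idx i = j.
Proof.
move=> jn; exists (Ordinal (ltn_pmod (n - j) n_gt0)); rewrite /opp_idx /=.
case: j jn => [|j] jn; first by rewrite subn0 modnn subn0 modnn.
by rewrite (modn_small (m := (n - j.+1)%N)) ?modn_small; lia.
Qed.

Definition state_of_poly (f : {poly int}) : state m n :=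
  [ffun i => inord (absz ((rmodXn n f)`_(opp_idx i) %% m%:Z)%Z)].

Definition poly_of_state (a : state m n) : {poly int} :=
  \sum_i (val (a i))%:Z *: 'X^(opp_idx i).

Let m_neq0 : m%:Z != 0. Proof. by rewrite eqz_nat -lt0n. Qed.

Let abs_modz_lt (z : int) : (absz (z %% m%:Z)%Z < m)%N.
Proof. by rewrite -ltz_nat gez0_abs ?modz_ge0 ?ltz_pmod. Qed.

Let abs_modz_eq (x y : int) :
  absz (x %% m%:Z)%Z = absz (y %% m%:Z)%Z <-> (m%:Z %| x - y)%Z.
Proof.
rewrite -eqz_mod_dvd; split; last by move/eqP ->.
by move=> E; apply/eqP; rewrite -[LHS]gez0_abs ?modz_ge0 // E gez0_abs ?modz_ge0.
Qed.

Let val_inord_Zm x : (x < m)%N -> val (inord x : Zm m) = x.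
Proof. by move=> xm; apply: inordK; rewrite prednK. Qed.

Lemma val_state_of_poly f i :
  val (state_of_poly f i) = absz ((rmodXn n f)`_(opp_idx i) %% m%:Z)%Z.
Proof. by rewrite ffunE val_inord_Zm. Qed.

Lemma state_of_poly_eq f g : state_of_poly f = state_of_poly g <-> in_ideal n m (f - g).
Proof.
rewrite in_idealE //; split => [E j|Ifg].
  rewrite rmodXnB // coefB; case: (ltnP j n) => [/opp_idx_surj [i <-]|jn].
    by apply/abs_modz_eq; rewrite -!val_state_of_poly E.
  have /leq_sizeP -> // := size_rmodXn n_gt0 f.
  by have /leq_sizeP -> // := size_rmodXn n_gt0 g; rewrite subrr dvdz0.
apply/ffunP => i; apply: val_inj; rewrite !val_state_of_poly.
by apply/abs_modz_eq; move: (Ifg (opp_idx i)); rewrite rmodXnB // coefB.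
Qed.

Lemma Tmap_state_of_poly f : Tmap (state_of_poly f) = state_of_poly (f * ('X + 1)).
Proof.
apply/ffunP => i; apply: val_inj; rewrite val_state_of_poly ffunE val_inord_Zm ?ltn_pmod //.
rewrite !val_state_of_poly mulrDr mulr1 rmodXnD // coefD.
rewrite rmodXnMX ?opp_idx_lt // -opp_idx_ordS addnC.
apply/eqP; rewrite -eqz_nat gez0_abs ?modz_ge0 // -modz_nat PoszD.
by rewrite !gez0_abs ?modz_ge0 // modzDm.
Qed.

Lemma iter_Tmap_state_of_poly f k :
  iter k (@Tmap m n) (state_of_poly f) = state_of_poly (f * ('X + 1) ^+ k).
Proof.
elim: k => [|k IH]; first by rewrite expr0 mulr1.
by rewrite iterS IH Tmap_state_of_poly exprSr mulrA.
Qed.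

Lemma poly_of_stateK : cancel poly_of_state state_of_poly.
Proof.
move=> a; have coefE j : (poly_of_state a)`_j =
    \sum_i (val (a i))%:Z * (j == opp_idx i)%:R.
  by rewrite coef_sum; apply: eq_bigr => i _; rewrite coefZ coefXn.
have size_a : (size (poly_of_state a) <= n)%N.
  apply/leq_sizeP => j jn; rewrite coefE big1 // => i _.
  by rewrite (_ : (j == opp_idx i) = false) ?mulr0 //; have := opp_idx_lt i; lia.
apply/ffunP => i; apply: val_inj; rewrite val_state_of_poly rmodXn_small // coefE.
rewrite (bigD1 i) //= eqxx mulr1 big1 ?addr0; last first.
  move=> j ji; rewrite (_ : (opp_idx i == opp_idx j) = false) ?mulr0 //.
  by apply/negbTE; apply: contra ji => /eqP /opp_idx_inj ->.
rewrite modz_nat absz_nat modn_small //.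
by case: (a i) => /= x; rewrite prednK.
Qed.

End StatesAsPolynomials.

Section CycleLength.
Variables (m n : nat) (a : state m n).

Lemma eventual_periodM P t :
  is_eventual_period a P -> 0 < t -> is_eventual_period a (P * t).
Proof.
move=> [P0 [N HN]] t0; split; first by rewrite muln_gt0 P0.
exists N => k kN; elim: t {t0} => [|t IH]; first by rewrite muln0 addn0.
by rewrite mulnS addnCA addnC HN // (leq_trans kN (leq_addr _ _)).
Qed.

Lemma eventual_periodB P Q :
  is_eventual_period a P -> is_eventual_period a Q -> P < Q ->
  is_eventual_period a (Q - P).
Proof.
move=> [P0 [N1 H1]] [Q0 [N2 H2]] PQ; split; first by rewrite subn_gt0.
exists (N1 + N2) => k kN; rewrite -H1; last by lia.
by rewrite -addnA subnK ?H2 //; lia.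
Qed.

Lemma cycle_length_period : is_eventual_period a (cycle_length a).
Proof.
rewrite /cycle_length; case: ex_minnP => c + _.
by rewrite /is_eventual_periodb; case: excluded_middle_informative.
Qed.

Lemma cycle_length_min Q : is_eventual_period a Q -> cycle_length a <= Q.
Proof.
move=> HQ; rewrite /cycle_length; case: ex_minnP => c _; apply.
by rewrite /is_eventual_periodb; case: excluded_middle_informative.
Qed.

Lemma eventual_period_dvdP Q : 0 < Q ->
  is_eventual_period a Q <-> cycle_length a %| Q.
Proof.
have cP := cycle_length_period; have c0 := proj1 cP.
move=> Q0; split; last first.
  move/dvdnP => [t Qt]; rewrite Qt mulnC; apply: eventual_periodM => //.
  by move: Q0; rewrite Qt muln_gt0 => /andP [].
move=> HQ; rewrite /dvdn; apply: contraT; rewrite -lt0n => r0.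
set c := cycle_length a in cP c0 *.
suff /cycle_length_min : is_eventual_period a (Q %% c) by rewrite leqNgt ltn_pmod.
have -> : Q %% c = Q - Q %/ c * c by lia.
case: (posnP (Q %/ c)) => [->|d0]; first by rewrite mul0n subn0.
apply: eventual_periodB => //.
  by rewrite mulnC; apply: eventual_periodM.
by rewrite {2}(divn_eq Q c) -{1}[_ * c]addn0 ltn_add2l.
Qed.

End CycleLength.

Section PeriodsOfOnePlusX.
Local Open Scope ring_scope.

Definition u : {poly int} := 'X + 1.

Definition uperiod (n q Q : nat) := exists N, in_ideal n q (u ^+ N * (u ^+ Q - 1)).

Variables (n q : nat).
Hypotheses (n_gt0 : (0 < n)%N) (q_gt0 : (0 < q)%N).

Lemma uperiod_eventual_period Q (a : state q n) :
  (0 < Q)%N -> uperiod n q Q -> is_eventual_period a Q.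
Proof.
move=> Q0 [N HN]; split=> //; exists N => k kN.
rewrite -(poly_of_stateK q_gt0 n_gt0 a) !iter_Tmap_state_of_poly // state_of_poly_eq //.
have -> : poly_of_state a * ('X + 1) ^+ (k + Q) - poly_of_state a * ('X + 1) ^+ k =
    (poly_of_state a * u ^+ (k - N)) * (u ^+ N * (u ^+ Q - 1)).
  by rewrite /u -(subnK kN) addnK !exprD; ring.
exact: in_idealMl.
Qed.

Lemma eventual_period_uperiod Q :
  is_eventual_period (state_of_poly q n 1) Q -> uperiod n q Q.
Proof.
move=> [Q0 [N /(_ N (leqnn N))]]; rewrite !iter_Tmap_state_of_poly // state_of_poly_eq //.
by rewrite !mul1r exprD => I; exists N; rewrite /u mulrBr mulr1.
Qed.

Lemma Pmn_cycle_length : Pmn q n = cycle_length (state_of_poly q n 1).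
Proof.
set d := state_of_poly q n 1; have [c0 _] := cycle_length_period d.
apply/eqP; rewrite eqn_leq leq_bigmax andbT; apply/bigmax_leqP => a _.
apply: dvdn_leq => //; apply/eventual_period_dvdP => //.
by apply: uperiod_eventual_period => //; apply/eventual_period_uperiod/cycle_length_period.
Qed.

Lemma Pmn_gt0 : (0 < Pmn q n)%N.
Proof. by rewrite Pmn_cycle_length; case: (cycle_length_period (state_of_poly q n 1)). Qed.

Lemma uperiod_PmnP Q : (0 < Q)%N -> uperiod n q Q <-> (Pmn q n %| Q)%N.
Proof.
move=> Q0; rewrite Pmn_cycle_length -eventual_period_dvdP //.
by split; [apply: uperiod_eventual_period | apply: eventual_period_uperiod].
Qed.

End PeriodsOfOnePlusX.

Lemma uperiod_mod_dvd n q d Q : d %| q -> uperiod n q Q -> uperiod n d Q.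
Proof. by move=> dq [N IN]; exists N; apply: in_ideal_mod_dvd IN. Qed.

Lemma uperiod_exp_dvd n n' q Q : n' %| n -> uperiod n q Q -> uperiod n' q Q.
Proof. by move=> nn' [N IN]; exists N; apply: in_ideal_exp_dvd IN. Qed.

Lemma uperiodMr n q Q t : uperiod n q Q -> uperiod n q (Q * t).
Proof. by move=> [N IN]; exists N; rewrite exprM subrX1 mulrA; apply: in_idealMr. Qed.

Lemma seq_exists_common_bound (T : eqType) (s : seq T) (P : T -> nat -> Prop) :
  (forall x N N', P x N -> N <= N' -> P x N') ->
  (forall x, x \in s -> exists N, P x N) ->
  exists N, forall x, x \in s -> P x N.
Proof.
move=> Pmono; elim: s => [|y s IH] Ps; first by exists 0.
have [N1 PN1] := Ps y (mem_head y s).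
have [N2 PN2] : exists N, forall x, x \in s -> P x N.
  by apply: IH => x xs; apply: Ps; rewrite in_cons xs orbT.
exists (N1 + N2) => x; rewrite in_cons => /predU1P [->|xs].
  by apply: Pmono PN1 _; rewrite leq_addr.
by apply: Pmono (PN2 x xs) _; rewrite leq_addl.
Qed.

Lemma uperiod_crt n m Q : 0 < n -> 0 < m ->
  (forall p, p \in primes m -> uperiod n (p ^ logn p m) Q) -> uperiod n m Q.
Proof.
move=> n0 m0 Hp.
have [N HN] := seq_exists_common_bound
  (fun p N N' IN le => in_ideal_expM_le IN le) Hp.
exists N; apply/in_idealE => // j.
rewrite dvdzE absz_nat; apply/(dvdn_partP _ m0) => p pm.
by rewrite p_part; move/(in_idealE n0): (HN p pm) => /(_ j); rewrite dvdzE absz_nat.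
Qed.

Lemma biglcm_seq_dvd (T : Type) (s : seq T) (F : T -> nat) Q :
  (\big[lcmn/1]_(x <- s) F x %| Q) = all (fun x => F x %| Q) s.
Proof. by elim: s => [|x s IH]; rewrite ?big_nil ?dvd1n // big_cons dvdn_lcm IH. Qed.

Lemma Pmn_crt m n : 0 < m -> 0 < n ->
  Pmn m n = \big[lcmn/1]_(p <- primes m) Pmn (p ^ logn p m) n.
Proof.
move=> m0 n0; set L := \big[lcmn/1]_(p <- primes m) _.
have pk_gt0 p : p \in primes m -> 0 < p ^ logn p m.
  by rewrite mem_primes expn_gt0 => /andP [/prime_gt0 ->].
have L0 : 0 < L.
  rewrite /L big_seq; elim/big_ind: _ => // [x y x0 y0|p /pk_gt0 pk0].
    by rewrite lcmn_gt0 x0.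
  exact: Pmn_gt0.
apply/eqP; rewrite eqn_dvd; apply/andP; split.
  apply/(uperiod_PmnP n0 m0 L0)/uperiod_crt => // p pm.
  apply/(uperiod_PmnP n0 (pk_gt0 p pm) L0).
  by move: (dvdnn L); rewrite {2}/L biglcm_seq_dvd => /allP; apply.
rewrite biglcm_seq_dvd; apply/allP => p pm.
apply/(uperiod_PmnP n0 (pk_gt0 p pm) (Pmn_gt0 n0 m0)).
apply: (uperiod_mod_dvd (pfactor_dvdnn p m)).
exact/(uperiod_PmnP n0 m0 (Pmn_gt0 n0 m0)).
Qed.

Section LiftingModPrimePowers.
Local Open Scope ring_scope.

Definition binom_mid p (Y : {poly int}) := \sum_(i < p.-1) Y ^+ i.+1 *+ 'C(p, i.+1).

Lemma binom_midE p (Y : {poly int}) : (1 < p)%N ->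
  (Y + 1) ^+ p - (Y ^+ p + 1) = binom_mid p Y.
Proof.
case: p => [//|p] _; rewrite /binom_mid /=.
rewrite exprD1n big_ord_recr big_ord_recl /= bin0 binn !mulr1n expr0.
by rewrite /bump /=; ring.
Qed.

Lemma in_ideal_binom_mid n p Y : prime p -> in_ideal n p (binom_mid p Y).
Proof.
move=> pp; apply: in_ideal_sum => -[i ilt] _; apply: in_idealMn_dvd.
by apply: prime_dvd_bin => //=; have := prime_gt1 pp; lia.
Qed.

Lemma in_ideal_Frobenius n p j : prime p ->
  in_ideal n p (u ^+ (p ^ j) - ('X^(p ^ j) + 1)).
Proof.
move=> pp; elim: j => [|j IH]; first by rewrite expn0 expr1 subrr; apply: in_ideal0.
have -> : u ^+ (p ^ j.+1) - ('X^(p ^ j.+1) + 1) =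
    ((u ^+ (p ^ j)) ^+ p - ('X^(p ^ j) + 1) ^+ p) + binom_mid p ('X^(p ^ j)).
  by rewrite -binom_midE ?prime_gt1 // -!exprM -expnSr; ring.
by apply: in_idealD; [apply: in_ideal_expB | apply: in_ideal_binom_mid].
Qed.

(* A^p - B^p = (A - B) * sum_i A^(p-1-i) B^i, and the sum is p B^(p-1) modulo q. *)
Lemma in_ideal_expB_mul n q p (A B : {poly int}) : (p %| q)%N ->
  in_ideal n q (A - B) -> in_ideal n (q * p)%N (A ^+ p - B ^+ p).
Proof.
move=> pq IAB; rewrite subrXX; apply: in_idealM => //.
have -> : \sum_(i < p) A ^+ (p.-1 - i) * B ^+ i =
    \sum_(i < p) (A ^+ (p.-1 - i) - B ^+ (p.-1 - i)) * B ^+ i + \sum_(i < p) B ^+ p.-1.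
  rewrite -big_split /=; apply: eq_bigr => -[i /= ilt] _.
  by rewrite mulrBl -exprD subnK ?subrK //; lia.
apply: in_idealD; last by rewrite sumr_const card_ord; apply: in_idealMn_dvd.
apply: in_ideal_sum => i _; apply: in_idealMr; apply: in_ideal_expB.
exact: in_ideal_mod_dvd pq IAB.
Qed.

Lemma uperiod_lift n p k R : (0 < k)%N ->
  uperiod n (p ^ k) R -> uperiod n (p ^ k.+1) (p * R).
Proof.
move=> k0 [N IN]; exists (p * N)%N.
have -> : u ^+ (p * N) * (u ^+ (p * R) - 1) = (u ^+ (N + R)) ^+ p - (u ^+ N) ^+ p.
  by rewrite -!exprM mulnDl exprD mulnC (mulnC R); ring.
rewrite expnSr; apply: in_ideal_expB_mul; first exact: dvdn_exp k0 (dvdnn p).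
by rewrite exprD -[X in _ - X]mulr1 -mulrBr.
Qed.

Lemma in_ideal_binom_tail n p k (a Z : {poly int}) : prime p -> (2 < p)%N -> (0 < k)%N ->
  in_ideal n (p ^ k) Z ->
  in_ideal n (p ^ k.+2) ((a + Z) ^+ p - a ^+ p - (a ^+ p.-1 * Z) *+ p).
Proof.
move=> pp p2 k0 IZ.
have term l : (2 <= l <= p)%N -> in_ideal n (p ^ k.+2) (a ^+ (p - l) * Z ^+ l *+ 'C(p, l)).
  case/andP=> l2 lp; have IZl := in_idealMl (a ^+ (p - l)) (in_ideal_exp l IZ).
  rewrite -expnM in IZl; case: (ltngtP l p) lp IZl => // [lp _|-> _] IZl.
    apply: (@in_ideal_mod_dvd _ (p * p ^ (k * l))%N); first by rewrite -expnS dvdn_exp2l //; nia.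
    by apply: in_idealMn_mod => //; apply: prime_dvd_bin => //; lia.
  by apply: in_idealMn; apply: (in_ideal_mod_dvd _ IZl); rewrite dvdn_exp2l //; nia.
case: p pp p2 term IZ => [//|[//|p]] pp p2 term _.
rewrite exprDn big_ord_recl big_ord_recl /= subn0 expr0 mulr1 bin0 mulr1n expr1 bin1.
rewrite /bump /= subSS subn0; set S := \sum_(i < p.+1) _.
have -> : forall x y : {poly int}, x + (y + S) - x - y = S by move=> x y; ring.
by apply: in_ideal_sum => -[i /= ilt] _; apply: term; rewrite /bump /=; lia.
Qed.

Lemma uperiod_descent n p k R : (0 < n)%N -> prime p -> (2 < p)%N -> (0 < k)%N ->
  uperiod n (p ^ k.+2) (p * R) -> uperiod n (p ^ k) R -> uperiod n (p ^ k.+1) R.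
Proof.
move=> n0 pp p2 k0 [N1 I1] [N2 I2].
set a := u ^+ N2; set Z := a * (u ^+ R - 1) in I2.
have aZ : a + Z = u ^+ (N2 + R) by rewrite /Z /a exprD; ring.
have Ipow : in_ideal n (p ^ k.+2) (u ^+ N1 * ((a + Z) ^+ p - a ^+ p)).
  have -> : u ^+ N1 * ((a + Z) ^+ p - a ^+ p) =
      u ^+ (p * N2) * (u ^+ N1 * (u ^+ (p * R) - 1)).
    by rewrite aZ /a -!exprM mulnDl exprD (mulnC N2) (mulnC R); ring.
  exact: in_idealMl.
have Itail := in_idealMl (u ^+ N1) (in_ideal_binom_tail a pp p2 k0 I2).
set Z' := u ^+ N1 * a ^+ p.-1 * Z.
have IpZ' : in_ideal n (p * (p ^ k * p))%N (p%:R * Z').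
  rewrite -expnSr -expnS (_ : p%:R * Z' = u ^+ N1 * ((a + Z) ^+ p - a ^+ p) -
      u ^+ N1 * ((a + Z) ^+ p - a ^+ p - (a ^+ p.-1 * Z) *+ p)).
    exact: in_idealB.
  by rewrite /Z' -mulr_natl; ring.
have IZ' : in_ideal n (p ^ k) Z' by apply: in_idealMl.
have pk0 : (0 < p ^ k)%N by rewrite expn_gt0 prime_gt0.
have := in_ideal_cancel_mul n0 (prime_gt0 pp) pk0 IZ' IpZ'.
rewrite -expnSr => IpZ; exists (N1 + N2 * p.-1 + N2)%N.
suff -> : u ^+ (N1 + N2 * p.-1 + N2) * (u ^+ R - 1) = Z' by [].
by rewrite /Z' /Z /a -exprM !exprD; ring.
Qed.

End LiftingModPrimePowers.

Lemma expn_gcd_eq1 a q x y : a ^ x = 1 %[mod q] -> a ^ y = 1 %[mod q] ->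
  a ^ gcdn x y = 1 %[mod q].
Proof.
elim/ltn_ind: y x => y IH x Hx Hy.
case: (posnP y) => [->|y0]; first by rewrite gcdn0.
rewrite gcdnC -gcdn_modr; apply: IH => //; first by rewrite ltn_pmod.
have Hq : a ^ (x %/ y * y) = 1 %[mod q] by rewrite mulnC expnM -modnXm Hy modnXm exp1n.
by move: Hx; rewrite {1}(divn_eq x y) expnD -modnMml Hq modnMml mul1n.
Qed.

Lemma wieferich_of_exp2 p b : prime p -> odd p -> ~~ (p %| b) ->
  2 ^ b = 1 %[mod p ^ 2] -> wieferich p.
Proof.
move=> pp op pb Hb; split => //.
have /Euler_exp_totient : coprime 2 (p ^ 2) by rewrite coprimeXr // coprime2n.
rewrite totient_pfactor // expn1 => /(expn_gcd_eq1 Hb).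
rewrite Gauss_gcdl; last by rewrite coprime_sym prime_coprime.
have /dvdnP [t ->] : gcdn b p.-1 %| p - 1 by rewrite subn1 dvdn_gcdr.
by move=> G; rewrite mulnC expnM -modnXm G modnXm exp1n.
Qed.

Section NonWieferichBase.
Local Open Scope ring_scope.

Lemma uperiod_prime_pfactor p e s n' : prime p -> (n' %| p ^ s - 1)%N ->
  uperiod (n' * p ^ e) p (p ^ e * (p ^ s - 1)).
Proof.
move=> pp n'b; exists (p ^ e)%N.
have ps : (p ^ e + p ^ e * (p ^ s - 1) = p ^ (e + s))%N.
  by rewrite mulnBr muln1 -expnD subnKC // leq_pexp2l ?prime_gt0 ?leq_addr.
have -> : u ^+ (p ^ e) * (u ^+ (p ^ e * (p ^ s - 1)) - 1) =
    (u ^+ (p ^ (e + s)) - ('X^(p ^ (e + s)) + 1)) - (u ^+ (p ^ e) - ('X^(p ^ e) + 1))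
    + ('X^(p ^ (e + s)) - 'X^(p ^ e)).
  by rewrite -ps exprD; ring.
apply: in_idealD; first by apply: in_idealB; apply: in_ideal_Frobenius.
by apply: in_ideal_XnB; rewrite -ps ?leq_addr // addKn mulnC dvdn_mul.
Qed.

Lemma uperiod_two_exp n q Q : coprime q 2 -> uperiod n q Q -> (2 ^ Q = 1 %[mod q])%N.
Proof.
have two_exp k : (2 ^+ k : int) = (2 ^ k)%N%:Z by rewrite -natz natrX.
have two_expB1 k : (2 ^+ k - 1 : int) = (2 ^ k - 1)%N%:Z.
  by rewrite -subzn ?expn_gt0 // two_exp.
move=> q2 [N /in_ideal_horner1]; rewrite !hornerE /= -[1 + 1]/(2 : int) two_expB1 two_exp.
rewrite Gauss_dvdzr; last by rewrite coprimezE /= coprimeXr // coprime_sym.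
by rewrite dvdzE absz_nat -eqn_mod_dvd ?expn_gt0 // => /eqP.
Qed.

Lemma coef_binom_mid_Xn p t j :
  (binom_mid p 'X^t)`_j = \sum_(i < p.-1) (j == t * i.+1)%N%:R *+ 'C(p, i.+1).
Proof. by rewrite coef_sum; apply: eq_bigr => i _; rewrite coefMn -exprM coefXn. Qed.

Lemma size_binom_mid_Xn p t : (0 < t)%N -> (size (binom_mid p 'X^t) <= t * p)%N.
Proof.
move=> t0; apply/leq_sizeP => j jn; rewrite coef_binom_mid_Xn big1 // => -[i /= ilt] _.
by rewrite (_ : (j == t * i.+1)%N = false) ?mul0rn //; nia.
Qed.

Lemma coef0_binom_mid_Xn p t : (0 < t)%N -> (binom_mid p 'X^t)`_0 = 0.
Proof.
move=> t0; rewrite coef_binom_mid_Xn big1 // => i _.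
by rewrite (_ : (0 == t * i.+1)%N = false) ?mul0rn //; nia.
Qed.

Lemma coef_binom_mid_Xn_t p t : (0 < t)%N -> (1 < p)%N -> (binom_mid p 'X^t)`_t = p%:R.
Proof.
move=> t0; case: p => [|[|p]] // _; rewrite coef_binom_mid_Xn big_ord_recl /= muln1 eqxx bin1.
rewrite big1 ?addr0 // => i _.
by rewrite (_ : (t == t * (bump 0 i).+1)%N = false) ?mul0rn //; rewrite /bump /=; nia.
Qed.

(* H^2 vanishes modulo q^2, so only the first two binomial terms survive. *)
Lemma in_ideal_two_add_exp n q (H : {poly int}) k : in_ideal n q H ->
  in_ideal n (q * q)%N ((2 + H) ^+ k.+1 - 2 ^+ k.+1 - k.+1%:R * 2 ^+ k * H).
Proof.
move=> IH; elim: k => [|k IHk].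
  by rewrite expr1 expr0 mulr1 mul1r (_ : _ - _ = 0); [apply: in_ideal0 | ring].
have -> : (2 + H) ^+ k.+2 - 2 ^+ k.+2 - k.+2%:R * 2 ^+ k.+1 * H =
    ((2 + H) ^+ k.+1 - 2 ^+ k.+1 - k.+1%:R * 2 ^+ k * H) * (2 + H) +
    k.+1%:R * 2 ^+ k * (H * H).
  by rewrite !exprS -[k.+2]addn1 natrD; ring.
by apply: in_idealD; [apply: in_idealMr | apply: in_idealMl; apply: in_idealM].
Qed.

Lemma prime_dvd_of_two_exp p M N b : prime p -> odd p ->
  (p%:Z %| 2 ^+ M * (2 ^+ b - 1))%Z ->
  (p%:Z %| 2 ^+ N * (N.+1%:R * (2 ^+ b - 1) + b%:R * 2 ^+ b))%Z -> (p %| b)%N.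
Proof.
move=> pp op; have cop k : coprimez p%:Z (2 ^+ k).
  by rewrite coprimezXr // coprimezE /= coprime_sym coprime2n.
rewrite !Gauss_dvdzr // => I1; rewrite rpredDl; last exact: dvdz_mull I1.
by rewrite Gauss_dvdzl // natz dvdzE !absz_nat.
Qed.

Lemma in_ideal_period_expansion n q N b (H v : {poly int}) :
  in_ideal n q H -> in_ideal n (q * q)%N (2 + H - v) ->
  in_ideal n (q * q)%N (v ^+ N.+1 * (v ^+ b - 1)) ->
  in_ideal n (q * q)%N ((2 ^+ N.+1 * (2 ^+ b - 1) : int)%:P +
    (2 ^+ N * (N.+1%:R * (2 ^+ b - 1) + b%:R * 2 ^+ b) : int)%:P * H).
Proof.
move=> IH Iv Ivb; have Iw k : in_ideal n (q * q)%N ((2 + H) ^+ k - v ^+ k).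
  exact: in_ideal_expB.
have -> : (2 ^+ N.+1 * (2 ^+ b - 1) : int)%:P +
    (2 ^+ N * (N.+1%:R * (2 ^+ b - 1) + b%:R * 2 ^+ b) : int)%:P * H =
    v ^+ N.+1 * (v ^+ b - 1)
    + ((2 + H) ^+ (N + b).+1 - v ^+ (N + b).+1) - ((2 + H) ^+ N.+1 - v ^+ N.+1)
    - ((2 + H) ^+ (N + b).+1 - 2 ^+ (N + b).+1 - (N + b).+1%:R * 2 ^+ (N + b) * H)
    + ((2 + H) ^+ N.+1 - 2 ^+ N.+1 - N.+1%:R * 2 ^+ N * H).
  rewrite !(rmorphB, rmorphD, rmorphM, rmorphXn, rmorph_nat) /= -addSn natrD !exprD !exprS.
  ring.
apply: in_idealD; last exact: in_ideal_two_add_exp.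
apply: in_idealB; last exact: in_ideal_two_add_exp.
by apply: in_idealB => //; apply: in_idealD.
Qed.

Lemma in_ideal_u_exp_pfactor p e : prime p ->
  in_ideal (p ^ e.+1) (p * p)%N (2 + binom_mid p 'X^(p ^ e) - u ^+ (p ^ e.+1)).
Proof.
move=> pp; have -> : 2 + binom_mid p 'X^(p ^ e) - u ^+ (p ^ e.+1) =
    - ((u ^+ (p ^ e)) ^+ p - ('X^(p ^ e) + 1) ^+ p) - ('X^(p ^ e) ^+ p - 1).
  by rewrite -binom_midE ?prime_gt1 // expnSr exprM; ring.
apply: in_idealB; last by rewrite -exprM -expnSr -[_ - 1]mul1r; apply: in_ideal_Xnsub1.
by apply/in_idealN/in_ideal_expB_mul => //; apply: in_ideal_Frobenius.
Qed.

Lemma uperiod_sq_pfactor p e b : prime p -> odd p ->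
  uperiod (p ^ e.+1) (p ^ 2) (p ^ e.+1 * b) -> (p %| b)%N.
Proof.
move=> pp op [N IN]; have p0 := prime_gt0 pp.
have pe0 : (0 < p ^ e)%N by rewrite expn_gt0 p0.
have pe1_0 : (0 < p ^ e.+1)%N by rewrite expn_gt0 p0.
have Iv : in_ideal (p ^ e.+1) (p * p)%N ((u ^+ (p ^ e.+1)) ^+ N.+1 * ((u ^+ (p ^ e.+1)) ^+ b - 1)).
  by rewrite -!exprM mulnn; apply: in_ideal_expM_le IN _; nia.
have := in_ideal_period_expansion (in_ideal_binom_mid _ _ pp) (in_ideal_u_exp_pfactor e pp) Iv.
set P := (_ + _)%R => IP.
have coefP j : P`_j = (if j == 0%N then 2 ^+ N.+1 * (2 ^+ b - 1) else 0) +
    2 ^+ N * (N.+1%:R * (2 ^+ b - 1) + b%:R * 2 ^+ b) * (binom_mid p 'X^(p ^ e))`_j.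
  by rewrite coefD coefC coefCM.
have sizeP : (size P <= p ^ e.+1)%N.
  have /leq_sizeP H0 := size_binom_mid_Xn p pe0.
  by apply/leq_sizeP => j jn; rewrite coefP H0 -?expnSr // mulr0 addr0; case: eqP => //; lia.
have := in_ideal_coef pe1_0 0 sizeP IP; have := in_ideal_coef pe1_0 (p ^ e) sizeP IP.
rewrite !coefP coef0_binom_mid_Xn // coef_binom_mid_Xn_t ?prime_gt1 // mulr0 addr0.
rewrite (negPf (lt0n_neq0 pe0)) add0r (natz p) PoszM dvdz_mul2r ?eqz_nat -?lt0n //.
move=> Ic /(dvdz_trans (dvdz_mulr p (dvdzz p))) Ia.
exact: prime_dvd_of_two_exp pp op Ia Ic.
Qed.

End NonWieferichBase.

Lemma not_uperiod_sq_Pmn n p : 0 < n -> prime p -> odd p -> ~ wieferich p ->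
  ~ uperiod n (p ^ 2) (Pmn p n).
Proof.
move=> n0 pp op nw; have p0 := prime_gt0 pp.
have [n' p_n' nE] := pfactor_coprime pp n0; set e := logn p n in nE.
have n'0 : 0 < n' by move: n0; rewrite nE muln_gt0 => /andP [].
set b := p ^ totient n' - 1.
have n'b : n' %| b by rewrite -eqn_mod_dvd ?expn_gt0 ?p0 // Euler_exp_totient.
have pb : ~~ (p %| b).
  by rewrite dvdn_subr ?expn_gt0 ?p0 ?dvdn_exp ?totient_gt0 // dvdn1 neq_ltn prime_gt1 ?orbT.
have /dvdnP [k kE] : Pmn p n %| p ^ e * b.
  apply/(uperiod_PmnP n0 p0); last by rewrite nE; apply: uperiod_prime_pfactor.
  by rewrite muln_gt0 expn_gt0 p0 subn_gt0 -{1}(expn0 p) ltn_exp2l ?prime_gt1 ?totient_gt0.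
move=> /(uperiodMr k); rewrite mulnC -kE.
have p2_2 : coprime (p ^ 2) 2 by rewrite coprimeXl // coprime_sym coprime2n.
case: e nE {kE} => [|e] nE.
  by rewrite mul1n => /(uperiod_two_exp p2_2) /(wieferich_of_exp2 pp op pb).
rewrite {1}nE => /(uperiod_exp_dvd (dvdn_mull _ (dvdnn _))) /(uperiod_sq_pfactor pp op).
exact/negP.
Qed.

Lemma Pmn_prime_power n p k : 0 < n -> prime p -> odd p -> ~ wieferich p ->
  Pmn (p ^ k.+1) n = p ^ k * Pmn p n.
Proof.
move=> n0 pp op nw; have p0 := prime_gt0 pp.
have p2 : 2 < p by move: (prime_gt1 pp) op; case: p {pp p0 nw} => [|[|[]]].
have pj0 j : 0 < p ^ j by rewrite expn_gt0 p0.
have Pmn0 j : 0 < Pmn (p ^ j) n := Pmn_gt0 n0 (pj0 j).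
have PmnP j Q : 0 < Q -> uperiod n (p ^ j) Q <-> Pmn (p ^ j) n %| Q.
  exact: uperiod_PmnP.
have Pmn_period j : uperiod n (p ^ j) (Pmn (p ^ j) n).
  exact: (PmnP _ _ (Pmn0 j)).2 (dvdnn _).
suff [] : Pmn (p ^ k.+1) n = p ^ k * Pmn p n /\ ~ uperiod n (p ^ k.+2) (Pmn (p ^ k.+1) n).
  by [].
elim: k => [|k [IHeq IHnot]].
  by rewrite expn0 mul1n expn1; split => //; apply: not_uperiod_sq_Pmn.
set L := Pmn (p ^ k.+1) n in IHeq IHnot *; set L' := Pmn (p ^ k.+2) n.
have pL0 : 0 < p * L by rewrite muln_gt0 p0 Pmn0.
have L'_pL : L' %| p * L by apply/(PmnP _ _ pL0)/uperiod_lift/Pmn_period.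
have /dvdnP [d L'E] : L %| L'.
  by apply/(PmnP _ _ (Pmn0 _))/(uperiod_mod_dvd _ (Pmn_period _)); rewrite dvdn_exp2l.
have : d %| p by rewrite -(dvdn_pmul2r (Pmn0 k.+1)) -L'E.
case/primeP: (pp) => _ /[apply] /pred2P [d1|dp].
  by case: IHnot; rewrite -[L]mul1n -d1 -L'E.
rewrite dp in L'E; split; first by rewrite L'E IHeq expnS mulnA.
rewrite L'E => /(uperiod_descent n0 pp p2 (ltn0Sn _)) /(_ (Pmn_period _)).
exact: IHnot.
Qed.

Theorem theorem1p6 (m n : nat) :
  0 < m -> 0 < n ->
  (forall p, p \in primes m -> odd p /\ ~ wieferich p) ->
  Pmn m n = \big[lcmn/1]_(p <- primes m) (p ^ (logn p m).-1 * Pmn p n).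
Proof.
move=> m0 n0 Hp; rewrite Pmn_crt //; apply: eq_big_seq => p pm.
have [op nw] := Hp p pm; have pp : prime p by move: pm; rewrite mem_primes => /andP [].
by rewrite -Pmn_prime_power // prednK // logn_gt0.
Qed.
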